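(* Let $A$ be a finite set of alternatives, let ${\mathcal D}\subseteq {\mathcal L}(A)$ be a Condorcet domain, and let $a,b,c\in A$ be distinct. Suppose ${\mathcal D}$ contains a linear order $w=\ldots bc\ldots a\ldots$ in which $b$ immediately precedes $c$ and $a$ is ranked below $c$. Then $a$ is a right obstruction to the swap $bc\to cb$ if and only if ${\mathcal D}|_{\{a,b,c\}}$ satisfies $cN_{\{a,b,c\}}1$ or $bN_{\{a,b,c\}}2$ (or both), and satisfies no other never condition.
   Context: ${\mathcal L}(A)$ denotes the set of all linear orders on $A$; a linear order is written as a word listing alternatives from most preferred to least preferred. For ${\mathcal D}\subseteq{\mathcal L}(A)$ and $T\subseteq A$, the restriction ${\mathcal D}|_T$ is the set of restrictions to $T$ of the orders in ${\mathcal D}$. For a triple $T$, $x\in T$ and $i\in\{1,2,3\}$, the never condition $xN_T i$ says that in every order of ${\mathcal D}|_T$ the alternative $x$ is not in position $i$ (position 1 = top, 3 = bottom). A domain ${\mathcal D}$ is a Condorcet domain if for every triple $T\subseteq A$ the restriction ${\mathcal D}|_T$ satisfies at least one never condition (equivalently, every profile of orders from ${\mathcal D}$ with an odd number of voters has a transitive majority relation); a set of orders on a triple is Condorcet if it satisfies at least one never condition. Right obstruction: in an order $w=\ldots bc\ldots a\ldots\in{\mathcal D}$ (with $b$ immediately followed by $c$, and $a$ ranked below them), the alternative $a$ is a right obstruction to the swap $bc\to cb$ if ${\mathcal D}|_{\{a,b,c\}}\cup\{cba\}$ is not Condorcet. *)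

From mathcomp Require Import all_boot.
Set Implicit Arguments. Unset Strict Implicit. Unset Printing Implicit Defensive.

Section Condorcet.
Variable A : finType.

(* A linear order on A is a word listing every alternative exactly once,
   from most preferred (position 1) to least preferred. *)
Definition is_lorder (s : seq A) : bool := uniq s && (size s == #|A|).

Definition domain := seq A -> Prop.

Definition is_domain (D : domain) : Prop := forall s, D s -> is_lorder s.

Definition restr (T : {set A}) (s : seq A) : seq A := [seq x <- s | x \in T].

Definition restrD (D : domain) (T : {set A}) : seq A -> Prop :=
  fun t => exists2 s, D s & t = restr T s.

(* Never condition  x N_T i  for a set E of orders on the triple T:
   in every order of E, x is not in position i (positions 1,2,3). *)
Definition never (E : seq A -> Prop) (x : A) (i : nat) : Prop :=
  forall t, E t -> index x t != i.-1.

Definition condorcet_on (T : {set A}) (E : seq A -> Prop) : Prop :=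
  exists x, exists i, [/\ x \in T, 1 <= i <= 3 & never E x i].

Definition is_triple (T : {set A}) : bool := #|T| == 3.

Definition condorcet_domain (D : domain) : Prop :=
  is_domain D /\ forall T : {set A}, is_triple T -> condorcet_on T (restrD D T).

Definition right_obstruction (D : domain) (w : seq A) (a b c : A) : Prop :=
  [/\ D w,
      (exists w1 w2, w = w1 ++ b :: c :: w2 /\ a \in w2)
    & ~ condorcet_on [set a; b; c]
          (fun t => restrD D [set a; b; c] t \/ t = [:: c; b; a])].

End Condorcet.

From mathcomp Require Import all_boot.

Set Implicit Arguments.
Unset Strict Implicit.
Unset Printing Implicit Defensive.

(* Restricted to the triple, [w] reads [b c a], so [D|_T] already violates
   [a N_T 3].  Adding [c b a] destroys exactly the never conditions [c N_T 1],
   [b N_T 2] and [a N_T 3]; hence [D|_T + {cba}] fails to be Condorcet iff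
   every never condition of [D|_T] is [c N_T 1] or [b N_T 2]. *)

Section Triple.
Variables (A : finType) (a b c : A).
Hypotheses (ab : a != b) (ac : a != c) (bc : b != c).
Local Notation T := [set a; b; c].

Lemma triple_abc : is_triple T.
Proof.
rewrite /is_triple setUC cardsU1 !inE cards2.
by rewrite (eq_sym c a) (negbTE ac) (eq_sym c b) (negbTE bc) ab.
Qed.

Lemma restr_bca (w1 w2 : seq A) :
  uniq (w1 ++ b :: c :: w2) -> a \in w2 ->
  restr T (w1 ++ b :: c :: w2) = [:: b; c; a].
Proof.
rewrite cat_uniq => /and3P[_ /hasPn w1_out].
rewrite /= !inE negb_or => /and3P[/andP[_ bw2] cw2 uw2] aw2.
have T_w1 : [seq x <- w1 | x \in T] = [::].
  apply/eqP; rewrite -[_ == _]negbK -has_filter; apply/hasPn => x xw1.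
  apply: contraL xw1 => xT; apply: w1_out.
  by move: xT; rewrite !inE => /orP[/orP[] | ] /eqP->; rewrite ?eqxx ?aw2 ?orbT.
have T_w2 : [seq x <- w2 | x \in T] = [seq x <- w2 | x == a].
  apply: eq_in_filter => x xw2; rewrite !inE.
  have [xb | _] := eqVneq x b; first by rewrite -xb xw2 in bw2.
  have [xc | _] := eqVneq x c; first by rewrite -xc xw2 in cw2.
  by rewrite !orbF.
rewrite /restr filter_cat T_w1 /= !inE !eqxx !orbT T_w2.
by rewrite (filter_pred1_uniq uw2 aw2).
Qed.

Lemma index_cba (x : A) (i : nat) :
  x \in T -> 1 <= i <= 3 -> index x [:: c; b; a] = i.-1 ->
  [\/ x = c /\ i = 1, x = b /\ i = 2 | x = a /\ i = 3].
Proof.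
rewrite !inE => /orP[/orP[] | ] /eqP-> /andP[i_ge1 i_le3] /=.
- rewrite eq_sym (negbTE ac) eq_sym (negbTE ab) eqxx.
  by case: i i_ge1 i_le3 => [|[|[|[|]]]] //= _ _ _; constructor 3.
- rewrite eq_sym (negbTE bc) eqxx.
  by case: i i_ge1 i_le3 => [|[|[|[|]]]] //= _ _ _; constructor 2.
- rewrite eqxx.
  by case: i i_ge1 i_le3 => [|[|[|[|]]]] //= _ _ _; constructor 1.
Qed.

Variable E : seq A -> Prop.
Hypothesis E_bca : E [:: b; c; a].

Lemma not_condorcet_add_cba :
  ~ condorcet_on T (fun t => E t \/ t = [:: c; b; a]) <->
  (forall (x : A) (i : nat), x \in T -> 1 <= i <= 3 -> never E x i ->
     (x = c /\ i = 1) \/ (x = b /\ i = 2)).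
Proof.
split=> [not_cd x i xT i_rng nv | only_c1_b2 [x [i [xT i_rng nv]]]].
- have idx : index x [:: c; b; a] = i.-1.
    apply/eqP/negPn/negP => ne; apply: not_cd; exists x, i; split=> //.
    by move=> t [/nv | ->].
  case: (index_cba xT i_rng idx) => [[-> ->] | [-> ->] | [xa i3]];
    [by left | by right |].
  have := nv _ E_bca.
  by rewrite xa i3 /= (eq_sym b) (negbTE ab) (eq_sym c) (negbTE ac) eqxx.
- have nvE : never E x i by move=> t Et; apply: nv; left.
  have := nv _ (or_intror erefl).
  case: (only_c1_b2 x i xT i_rng nvE) => [[-> ->] | [-> ->]] /=; first by rewrite eqxx.
  by rewrite (eq_sym c b) (negbTE bc) eqxx.
Qed.

End Triple.

Theorem proposition1 (A : finType) (D : seq A -> Prop) (a b c : A) (w : seq A) :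
  condorcet_domain D ->
  a != b -> a != c -> b != c ->
  D w ->
  (exists w1 w2, w = w1 ++ b :: c :: w2 /\ a \in w2) ->
  (right_obstruction D w a b c <->
    ((never (restrD D [set a; b; c]) c 1 \/ never (restrD D [set a; b; c]) b 2) /\
     (forall (x : A) (i : nat), x \in [set a; b; c] -> 1 <= i <= 3 ->
        never (restrD D [set a; b; c]) x i ->
        (x = c /\ i = 1) \/ (x = b /\ i = 2)))).
Proof.
move=> [D_orders D_cd] ab ac bc Dw w_bca.
have E_bca : restrD D [set a; b; c] [:: b; c; a].
  have [w1 [w2 [ew aw2]]] := w_bca.
  exists w => //; rewrite ew restr_bca //.
  by case/andP: (D_orders _ Dw); rewrite ew.
have only_c1_b2_iff := not_condorcet_add_cba ab ac bc E_bca.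
split=> [[_ _ /only_c1_b2_iff only_c1_b2] | [_ /only_c1_b2_iff not_cd]]; last by split.
split=> //; have [x [i [xT i_rng nv]]] := D_cd _ (triple_abc ab ac bc).
by case: (only_c1_b2 x i xT i_rng nv) => [[xc i1] | [xb i2]]; subst; [left | right].
Qed.
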